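(* Fix $N\in\mathbb{N}_+$. Consider all triples $(N_1,N_2,\lambda)\in\mathbb{N}^3$ with $N_1+N_2\geq1$ such that the symmetric nested array $\mathcal{D}=\mathcal{G}\cup(\max\mathcal{G}-\mathcal{G}+\lambda)$, with $\mathcal{G}=\mathcal{G}_{\mathrm{NA}}(N_1,N_2)$, satisfies $|\mathcal{D}|=N$ and $\mathcal{D}+\mathcal{D}=\{0,\ldots,2\max\mathcal{D}\}$. Among such triples, there is one maximizing the aperture $\max\mathcal{D}$ for which $\mathcal{D}=\mathcal{D}_{\mathrm{CNA}}(N_1',N_2')$ for some $N_1',N_2'\in\mathbb{N}$.
   Context: For $a\in\mathbb{Z}$, $b\in\mathbb{N}_+$, $c\in\mathbb{Z}$, $\{a:b:c\}=\{a,a+b,\ldots\}\cap(-\infty,c]$ (empty if $c<a$), and $\{a:c\}=\{a:1:c\}$. Set sums/differences are elementwise: $\mathcal{A}+\mathcal{B}=\{a+b\}$, $\mathcal{A}+c=\{a+c\}$, $c-\mathcal{A}=\{c-a\}$. For $N_1,N_2\in\mathbb{N}$ let $\mathcal{D}_1=\{0:N_1-1\}$ and $\mathcal{D}_2=\{0:N_1+1:(N_2-1)(N_1+1)\}$. The Nested Array is $\mathcal{G}_{\mathrm{NA}}(N_1,N_2)=\mathcal{D}_1\cup(\mathcal{D}_2+N_1)$. The Concatenated Nested Array is $\mathcal{D}_{\mathrm{CNA}}(N_1,N_2)=\mathcal{D}_1\cup(\mathcal{D}_2+N_1)\cup(\mathcal{D}_1+N_2(N_1+1))$. *)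

(* Finite sets of integers are represented by sequences
   (seq int); set equality is membership equality (=i), cardinality is
   size (undup _). *)
From mathcomp Require Import all_boot all_order all_algebra.
Import Order.TTheory GRing.Theory Num.Theory.
Local Open Scope ring_scope.

(* {a:b:c} = {a, a+b, ...} ∩ (-oo, c]  (empty if c < a), for b >= 1.
   The candidates a + k b for k = 0..|c-a| cover all such elements. *)
Definition prog (a : int) (b : nat) (c : int) : seq int :=
  [seq x <- [seq a + (k * b)%:Z | k <- iota 0 (absz (c - a)).+1] | x <= c].

Definition rng (a c : int) : seq int := prog a 1 c.

Definition shiftS (A : seq int) (c : int) : seq int := [seq x + c | x <- A].
Definition reflS (c : int) (A : seq int) : seq int := [seq c - x | x <- A].
Definition sumS (A B : seq int) : seq int := [seq x + y | x <- A, y <- B].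
(* max A (meaningful for nonempty A) *)
Definition maxS (A : seq int) : int := foldr Num.max (head 0 A) A.
Definition cardS (A : seq int) : nat := size (undup A).

Definition D1 (N1 : nat) : seq int := rng 0 (N1%:Z - 1).
Definition D2 (N1 N2 : nat) : seq int :=
  prog 0 N1.+1 ((N2%:Z - 1) * (N1.+1)%:Z).

Definition G_NA (N1 N2 : nat) : seq int := D1 N1 ++ shiftS (D2 N1 N2) N1%:Z.

Definition D_CNA (N1 N2 : nat) : seq int :=
  G_NA N1 N2 ++ shiftS (D1 N1) (N2 * N1.+1)%:Z.

Definition symNA (N1 N2 lam : nat) : seq int :=
  let G := G_NA N1 N2 in G ++ shiftS (reflS (maxS G) G) lam%:Z.

Definition admissible (N N1 N2 lam : nat) : Prop :=
  let D := symNA N1 N2 lam in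
  [/\ (0 < N1 + N2)%N, cardS D = N & sumS D D =i rng 0 (2 * maxS D)].

From mathcomp Require Import all_boot all_order all_algebra.
From mathcomp Require Import zify.
Import Order.TTheory GRing.Theory Num.Theory.
Set Implicit Arguments.
Unset Strict Implicit.
Unset Printing Implicit Defensive.
Local Open Scope ring_scope.

(* Call a set D of integers "a-dense on [0,A]" if it contains
   the end blocks [0,a] and [A-a,A] and meets every window (y-a-1, y] with
   a < y <= A.  Counting the two end blocks and one element per disjoint
   window shows A <= (N-2a)(a+1) + a - 1 =: cna_aperture N a (or A <= N - 1),
   where N = |D|.  A nested array G of aperture L contains a block [0,a] and
   has gaps shorter than a+1 above it ("spread"); moreover L+a+1 is not in
   G+G.  If the symmetric array D = G ∪ (L+lam-G) has a hole-free sum set,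
   this last fact forces lam <= L+a+1, and then D is a-dense on [0, L+lam].

   For b > 0 the symmetric array with (N1,N2,lam) = (a,b,a) is
   exactly D_CNA(a,b): it has 2a+b elements, aperture cna_aperture (2a+b) a,
   and its density gives the hole-free sum set.  Choosing a maximising
   cna_aperture N a over 2a < N proves the theorem. *)

Lemma mem_prog a b c x : (0 < b)%N ->
  (x \in prog a b c) <-> (a <= x <= c /\ exists k : nat, x = a + (k * b)%:Z).
Proof.
move=> b0; rewrite /prog mem_filter; split.
- case/andP=> xc /mapP [k _ kx]; rewrite kx /= in xc *; split; [lia | by exists k].
- case=> /andP [ax xc] [k xk]; apply/andP; split; first by [].
  apply/mapP; exists k => //; rewrite mem_iota /= add0n; nia.
Qed.

Lemma mem_rng a c x : (x \in rng a c) = (a <= x <= c).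
Proof.
apply/idP/idP => [/(mem_prog _ _ _ (ltn0Sn 0)) [] //|axc].
by apply/(mem_prog _ _ _ (ltn0Sn 0)); split => //; exists (absz (x - a)); lia.
Qed.

Lemma foldr_max_ub (d : int) s x : x \in d :: s -> x <= foldr Num.max d s.
Proof.
elim: s => [|y s IH] /=; first by rewrite inE => /eqP ->.
rewrite le_max !inE => /or3P [/eqP xd|/eqP ->|xs]; last 2 first.
- by rewrite lexx.
- by rewrite IH ?inE ?xs ?orbT.
by rewrite IH ?inE ?xd ?eqxx ?orbT.
Qed.

Lemma foldr_max_le (d : int) s v :
  (forall x, x \in d :: s -> x <= v) -> foldr Num.max d s <= v.
Proof.
elim: s => [|y s IH] ub /=; first exact/ub/mem_head.
rewrite ge_max ub ?inE ?eqxx ?orbT //= IH // => x; rewrite inE => /orP [/eqP ->|xs].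
- exact/ub/mem_head.
- by apply: ub; rewrite !inE xs !orbT.
Qed.

Lemma maxS_eq (A : seq int) v : v \in A -> (forall x, x \in A -> x <= v) -> maxS A = v.
Proof.
case: A => [//|a t] vA ub; rewrite /maxS [head _ _]/=; apply/eqP; rewrite eq_le.
rewrite foldr_max_le => [|x]; last first.
  by rewrite inE => /orP [/eqP ->|xA]; apply: ub; rewrite ?mem_head.
by rewrite foldr_max_ub // inE vA orbT.
Qed.

Lemma mem_sumS (A B : seq int) x :
  x \in sumS A B <-> exists a b, [/\ a \in A, b \in B & x = a + b].
Proof.
split => [/allpairsP [[a b] [/= aA bB ->]]|[a [b [aA bB ->]]]]; first by exists a, b.
by apply/allpairsP; exists (a, b).
Qed.

Definition block (c : int) (n : nat) : seq int := [seq c + i%:Z | i <- iota 0 n].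

Lemma mem_block c n x : (x \in block c n) = (c <= x < c + n%:Z).
Proof.
apply/mapP/idP => [[i] /[!mem_iota] ? ->|xc]; first lia.
by exists (absz (x - c)); [rewrite mem_iota | ]; lia.
Qed.

Lemma uniq_block c n : uniq (block c n).
Proof. by rewrite map_inj_uniq ?iota_uniq // => i j /=; lia. Qed.

Lemma size_block c n : size (block c n) = n.
Proof. by rewrite size_map size_iota. Qed.

Lemma uniq_cat_lt (s1 s2 : seq int) : uniq s1 -> uniq s2 ->
  (forall x y, x \in s1 -> y \in s2 -> x < y) -> uniq (s1 ++ s2).
Proof.
move=> u1 u2 lt12; rewrite cat_uniq u1 u2 andbT; apply/hasPn => y ys.
by apply/negP => /lt12 /(_ ys); rewrite ltxx.
Qed.

Lemma card_ge (S D : seq int) : uniq S -> {subset S <= D} -> (size S <= cardS D)%N.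
Proof. by move=> uS SD; apply: uniq_leq_size => // x /SD; rewrite mem_undup. Qed.

Lemma card_eq (S D : seq int) : uniq S -> S =i D -> cardS D = size S.
Proof.
move=> uS SD; apply/perm_size/uniq_perm; rewrite ?undup_uniq // => x.
by rewrite mem_undup SD.
Qed.

(* The aperture of D_CNA(a, N-2a), which has N elements. *)
Definition cna_aperture (N a : nat) : int := ((N - 2 * a) * a.+1)%:Z + a%:Z - 1.

Definition dense (D : seq int) (A : int) (a : nat) : Prop :=
  [/\ forall y, 0 <= y <= a%:Z -> y \in D,
      forall y, A - a%:Z <= y <= A -> y \in D
    & forall y, a%:Z < y <= A -> exists2 d, d \in D & y - a.+1%:Z < d <= y].

Lemma windows (D : seq int) (c A : int) (s : nat) :
  (forall y, c < y <= A -> exists2 d, d \in D & y - s.+1%:Z < d <= y) ->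
  forall K : nat, c + (K * s.+1)%:Z <= A ->
  exists t : seq int, [/\ uniq t, size t = K &
     forall x, x \in t -> x \in D /\ c < x <= c + (K * s.+1)%:Z].
Proof.
move=> win; elim=> [|K IH] hK; first by exists [::].
have [|t [ut st tD]] := IH; first lia.
have [|d dD hd] := win (c + (K.+1 * s.+1)%:Z); first lia.
exists (d :: t); split; rewrite /= ?st //.
- by rewrite ut andbT; apply/negP => /tD; lia.
- by move=> x; rewrite inE => /orP [/eqP ->|/tD [xD hx]]; split => //; lia.
Qed.

(* A dense set reaches every point of [0,A] as a sum of two of its elements:
   an element in the window below x plus a small element of the first block. *)
Lemma dense_sum_cover D A a x : dense D A a -> 0 <= x <= A -> x \in sumS D D.
Proof.
case=> low _ win hx; apply/mem_sumS.
have [xa|xa] := lerP x a%:Z.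
  by exists x, 0; split; try apply: low; lia.
have [|d dD hd] := win x; first lia.
by exists d, (x - d); split => //; [apply: low|]; lia.
Qed.

Lemma dense_card_bound D A a : 0 <= A -> dense D A a ->
  exists a', (2 * a' < cardS D)%N /\ A <= cna_aperture (cardS D) a'.
Proof.
move=> A0 [low high win].
have [Asmall|Abig] := lerP A (2 * a%:Z + 1).
  have sub : {subset block 0 (absz A).+1 <= D}.
    move=> y; rewrite mem_block => hy.
    by have [ya|ya] := lerP y a%:Z; [apply: low | apply: high]; lia.
  have := card_ge (uniq_block _ _) sub; rewrite size_block => hN.
  by exists 0%N; split; rewrite /cna_aperture; lia.
pose K := ((absz A - 2 * a - 1) %/ a.+1)%N.
have hK : (K * a.+1 <= absz A - 2 * a - 1 < K.+1 * a.+1)%N by rewrite /K; lia.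
have [|t [ut st tD]] := windows (K := K) win; first lia.
pose S := block 0 a.+1 ++ t ++ block (A - a%:Z) a.+1.
have sub : {subset S <= D}.
  move=> y; rewrite 2!mem_cat !mem_block => /or3P [hy|/tD [] //|hy].
  - by apply: low; lia.
  - by apply: high; lia.
have uS : uniq S.
  apply: uniq_cat_lt; rewrite ?uniq_block //.
  - apply: uniq_cat_lt; rewrite ?uniq_block // => x y /tD [_ hx].
    by rewrite mem_block; lia.
  - by move=> x y; rewrite mem_block mem_cat mem_block => hx /orP [/tD [_ hy]|hy]; lia.
have := card_ge uS sub; rewrite !size_cat !size_block st => hN.
by exists a; split; rewrite /cna_aperture; nia.
Qed.

Definition symS (G : seq int) (lam : nat) : seq int :=
  G ++ shiftS (reflS (maxS G) G) lam%:Z.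

Definition spread (G : seq int) (L : int) (a : nat) : Prop :=
  [/\ L \in G, forall x, x \in G -> 0 <= x <= L,
      forall y, 0 <= y <= a%:Z -> y \in G
    & forall y, a%:Z < y <= L -> exists2 g, g \in G & y - a.+1%:Z < g <= y].

Section SymmetricExtension.

Variables (G : seq int) (L : int) (a : nat).
Hypothesis spreadG : spread G L a.

Let G_range x : x \in G -> 0 <= x <= L. Proof. by case: spreadG => _ + _ _; apply. Qed.
Let low y : 0 <= y <= a%:Z -> y \in G. Proof. by case: spreadG => _ _ + _; apply. Qed.
Let a_le_L : a%:Z <= L. Proof. by have /G_range : a%:Z \in G by apply: low; lia. Qed.

Lemma spread_aperture_ge0 : 0 <= L.
Proof. by have := a_le_L; lia. Qed.

(* The windows also work upwards: every w in [0,L] has an element of G in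
   [w, w+a]; this gives density of the reflected copy L+lam-G. *)
Lemma spread_up w : 0 <= w <= L -> exists2 g, g \in G & w <= g <= w + a%:Z.
Proof.
move=> hw; have [wa|wa] := lerP w a%:Z; first by exists w; [apply: low|]; lia.
have [wL|wL] := lerP (w + a%:Z) L; last by case: spreadG => LG _ _ _; exists L => //; lia.
case: spreadG => _ _ _ /(_ (w + a%:Z)) [|g gG hg]; first lia.
by exists g => //; lia.
Qed.

Lemma maxS_spread : maxS G = L.
Proof. by case: spreadG => LG _ _ _; apply: maxS_eq => // x /G_range; lia. Qed.

Lemma mem_symS lam x : x \in symS G lam <->
  x \in G \/ exists2 g, g \in G & x = L + lam%:Z - g.
Proof.
rewrite /symS mem_cat maxS_spread; split => [/orP [->|]|[->//|[g gG ->]]].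
- by left.
- by case/mapP => _ /mapP [g gG ->] ->; right; exists g => //; lia.
- apply/orP; right; apply/mapP; exists (L - g); last lia.
  by apply/mapP; exists g.
Qed.

Lemma symS_range lam x : x \in symS G lam -> 0 <= x <= L + lam%:Z.
Proof. by case/mem_symS => [/G_range|[g /G_range hg ->]]; lia. Qed.

Lemma symS_refl lam x : x \in symS G lam -> L + lam%:Z - x \in symS G lam.
Proof.
case/mem_symS => [xG|[g gG ->]]; apply/mem_symS; first by right; exists x.
by left; rewrite opprB addrC subrK.
Qed.

Lemma maxS_symS lam : maxS (symS G lam) = L + lam%:Z.
Proof.
apply: maxS_eq => [|x /symS_range]; last lia.
by rewrite -[_ + _]subr0; apply/symS_refl/mem_symS; left; apply: low; lia.
Qed.

Lemma symS_sum_half lam (D := symS G lam) :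
  (forall x, 0 <= x <= L + lam%:Z -> x \in sumS D D) ->
  sumS D D =i rng 0 (2 * maxS D).
Proof.
move=> half x; rewrite maxS_symS mem_rng; apply/idP/idP.
  by case/mem_sumS => [u [v [/symS_range hu /symS_range hv ->]]]; lia.
move=> hx; have [xA|xA] := lerP x (L + lam%:Z); first by apply: half; lia.
have /mem_sumS [u [v [uD vD e]]] : 2 * (L + lam%:Z) - x \in sumS D D.
  by apply: half; lia.
by apply/mem_sumS; exists (L + lam%:Z - u), (L + lam%:Z - v); split; rewrite ?symS_refl //; lia.
Qed.

Lemma symS_dense lam : lam%:Z <= L + a%:Z + 1 -> dense (symS G lam) (L + lam%:Z) a.
Proof.
move=> lam_le; have inG y : y \in G -> y \in symS G lam by move=> yG; apply/mem_symS; left.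
split=> [y /low /inG //|y hy|y hy].
  have -> : y = L + lam%:Z - (L + lam%:Z - y) by lia.
  by apply/symS_refl/inG/low; lia.
have [yL|yL] := lerP y L.
  by case: spreadG => _ _ _ /(_ y) [|g /inG]; [lia|exists g].
have [ylam|ylam] := ltrP y lam%:Z; first by exists L; [case: spreadG => + _ _ _; apply: inG|lia].
have [|g gG hg] := spread_up (w := L + lam%:Z - y); first lia.
by exists (L + lam%:Z - g); [apply/mem_symS; right; exists g | lia].
Qed.

(* If L+a+1 is not a sum of two elements of G, a hole-free sum set of the
   symmetric extension forces lam <= L+a+1: otherwise L+a+1 could only be a
   sum of two elements of G. *)
Lemma symS_lam_bound lam (D := symS G lam) :
  L + a%:Z + 1 \notin sumS G G -> sumS D D =i rng 0 (2 * maxS D) ->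
  lam%:Z <= L + a%:Z + 1.
Proof.
move=> gap full; rewrite leNgt; apply/negP => lam_big; move/negP: gap; apply.
have /mem_sumS [u [v [uD vD e]]] : L + a%:Z + 1 \in sumS D D.
  by rewrite full mem_rng maxS_symS; lia.
have inG x : x \in D -> x <= L + a%:Z + 1 -> x \in G.
  by case/mem_symS => [//|[g /G_range hg ->]]; lia.
have := symS_range uD; have := symS_range vD => hv hu.
by apply/mem_sumS; exists u, v; split; rewrite ?inG //; lia.
Qed.

End SymmetricExtension.

Lemma symS_aperture_bound G L a lam (D := symS G lam) :
  spread G L a -> L + a%:Z + 1 \notin sumS G G -> sumS D D =i rng 0 (2 * maxS D) ->
  exists a', (2 * a' < cardS D)%N /\ maxS D <= cna_aperture (cardS D) a'.
Proof.
move=> sp gap full; rewrite (maxS_symS sp); apply: dense_card_bound.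
  by have := spread_aperture_ge0 sp; lia.
exact/symS_dense/(symS_lam_bound sp gap full).
Qed.

Lemma symS_full_sum G L a lam (D := symS G lam) :
  spread G L a -> lam%:Z <= L + a%:Z + 1 -> sumS D D =i rng 0 (2 * maxS D).
Proof.
move=> sp lam_le; apply: (symS_sum_half sp) => x hx.
exact: dense_sum_cover (symS_dense sp lam_le) hx.
Qed.

Lemma mem_G_NA n1 n2 x : x \in G_NA n1 n2 <->
  0 <= x < n1%:Z \/ exists2 j : nat, (0 < j <= n2)%N & x = (j * n1.+1)%:Z - 1.
Proof.
rewrite /G_NA mem_cat /D1 mem_rng; split => [/orP [hx|]|[hx|[j hj ->]]].
- by left; lia.
- case/mapP => y /(mem_prog _ _ _ (ltn0Sn n1)) [hy [k yk]] ->.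
  right; exists k.+1; rewrite yk in hy *; last lia.
  by case: (ltnP k n2) => [|n2k]; [lia | have := leq_mul n2k (leqnn n1.+1); nia].
- by apply/orP; left; lia.
case: j hj => [//|j] hj; apply/orP; right; apply/mapP.
exists ((j * n1.+1)%:Z); last by rewrite mulSn; lia.
apply/(mem_prog _ _ _ (ltn0Sn n1)); split; last by exists j; lia.
by have := leq_mul (proj2 (andP hj)) (leqnn n1.+1); rewrite mulSn; nia.
Qed.

(* The largest element of G_NA(n1,n2) (when n1 + n2 > 0). *)
Definition na_aperture (n1 n2 : nat) : int :=
  if n2 == 0%N then n1%:Z - 1 else (n2 * n1.+1)%:Z - 1.

Lemma na_aperture_teeth n1 n2 : (0 < n2)%N -> na_aperture n1 n2 = (n2 * n1.+1)%:Z - 1.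
Proof. by rewrite /na_aperture; case: eqP => //; lia. Qed.

(* With at least one tooth, G_NA(n1,n2) is spread with parameter n1: the
   block [0,n1] is filled (n1 is the first tooth) and teeth are n1+1 apart. *)
Lemma G_NA_spread n1 n2 : (0 < n2)%N -> spread (G_NA n1 n2) (na_aperture n1 n2) n1.
Proof.
move=> n2_gt0; rewrite na_aperture_teeth //; split.
- by apply/mem_G_NA; right; exists n2; rewrite ?n2_gt0 ?leqnn.
- move=> x /mem_G_NA [hx|[j /andP [j_gt0 jn2] ->]]; first nia.
  by have := leq_mul jn2 (leqnn n1.+1); nia.
- move=> y hy; apply/mem_G_NA; have [yn1|yn1] := ltrP y n1%:Z; first by left; lia.
  by right; exists 1%N; lia.
move=> y hy; pose j := ((absz y).+1 %/ n1.+1)%N.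
have hj : (j * n1.+1 <= (absz y).+1 < j.+1 * n1.+1)%N by rewrite /j; lia.
exists ((j * n1.+1)%:Z - 1); last by rewrite mulSn in hj; lia.
apply/mem_G_NA; right; exists j => //; apply/andP; split.
- by case: j hj => // hj; lia.
- by case: (leqP j n2) => // n2j; have := leq_mul n2j (leqnn n1.+1); nia.
Qed.

(* (n2+1)(n1+1) - 1 is not a sum of two elements of G_NA(n1,n2) when
   n1 > 0: sums involving a tooth are -1 or -2 modulo n1+1 and too small. *)
Lemma G_NA_gap n1 n2 : (0 < n1)%N -> (0 < n2)%N ->
  na_aperture n1 n2 + n1%:Z + 1 \notin sumS (G_NA n1 n2) (G_NA n1 n2).
Proof.
move=> n1_gt0 n2_gt0; rewrite na_aperture_teeth //.
apply/negP => /mem_sumS [u [v [/mem_G_NA hu /mem_G_NA hv e]]].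
case: hu => [hu|[j /andP [_ jn2] eu]]; case: hv => [hv|[k /andP [_ kn2] ev]].
- nia.
- by have := leq_mul kn2 (leqnn n1.+1); lia.
- by have := leq_mul jn2 (leqnn n1.+1); lia.
have [jk|jk] := leqP (j + k) n2.+1;
  by have := leq_mul jk (leqnn n1.+1); rewrite mulnDl; lia.
Qed.

Lemma G_NA_interval n1 n2 x : (n1 * n2 = 0)%N ->
  x \in G_NA n1 n2 <-> 0 <= x < (n1 + n2)%:Z.
Proof.
move=> /eqP; rewrite muln_eq0 => /orP [] /eqP -> ; rewrite mem_G_NA.
- split=> [[|[j hj ->]]|hx]; [lia | lia | right; exists (absz x).+1; lia].
- by split=> [[|[j hj ->]]|hx]; [lia | lia | left; lia].
Qed.

Lemma interval_spread (G : seq int) (m : nat) : (0 < m)%N ->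
  (forall x, x \in G <-> 0 <= x < m%:Z) ->
  spread G (m%:Z - 1) m.-1 /\ m%:Z - 1 + m.-1%:Z + 1 \notin sumS G G.
Proof.
move=> m_gt0 memG; split; first split.
- by apply/memG; lia.
- by move=> x /memG; lia.
- by move=> y hy; apply/memG; lia.
- by move=> y; lia.
by apply/negP => /mem_sumS [u [v [/memG hu /memG hv e]]]; lia.
Qed.

Lemma G_NA_structure n1 n2 : (0 < n1 + n2)%N -> exists a,
  spread (G_NA n1 n2) (na_aperture n1 n2) a /\
  na_aperture n1 n2 + a%:Z + 1 \notin sumS (G_NA n1 n2) (G_NA n1 n2).
Proof.
move=> n_gt0; have [/eqP|prod_gt0] := posnP (n1 * n2).
  rewrite muln_eq0 => n_eq0.
  have -> : na_aperture n1 n2 = (n1 + n2)%:Z - 1.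
    by rewrite /na_aperture; case: eqP; case/orP: n_eq0 => /eqP ->; lia.
  exists (n1 + n2).-1; apply: interval_spread n_gt0 _ => x.
  by apply: G_NA_interval; apply/eqP; rewrite muln_eq0.
rewrite muln_gt0 in prod_gt0; case/andP: prod_gt0 => n1_gt0 n2_gt0.
by exists n1; split; [apply: G_NA_spread | apply: G_NA_gap].
Qed.

Lemma admissible_aperture_bound N n1 n2 lam : admissible N n1 n2 lam ->
  exists a, (2 * a < N)%N /\ maxS (symNA n1 n2 lam) <= cna_aperture N a.
Proof.
case=> n_gt0 <- full; have [a [spreadG gap]] := G_NA_structure n_gt0.
exact: symS_aperture_bound spreadG gap full.
Qed.

Definition teeth (a b : nat) : seq int := [seq (j * a.+1)%:Z - 1 | j <- iota 1 b].

Lemma G_NA_eq a b : G_NA a b =i block 0 a ++ teeth a b.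
Proof.
move=> x; rewrite [x \in _ ++ teeth a b]mem_cat mem_block; apply/idP/idP.
- case/mem_G_NA => [hx|[j hj ->]]; apply/orP; first by left; lia.
  by right; apply/mapP; exists j; rewrite // mem_iota; lia.
case/orP => [hx|/mapP [j]]; first by apply/mem_G_NA; left; lia.
by rewrite mem_iota => hj ->; apply/mem_G_NA; right; exists j => //; lia.
Qed.

Definition cna_list (a b : nat) : seq int :=
  block 0 a ++ teeth a b ++ block (b * a.+1)%:Z a.

Lemma uniq_cna_list a b : (0 < b)%N -> uniq (cna_list a b).
Proof.
have teeth_range x : x \in teeth a b -> a%:Z <= x <= (b * a.+1)%:Z - 1.
  case/mapP => j; rewrite mem_iota => /andP [j_gt0 jb] ->.
  by have := leq_mul j_gt0 (leqnn a.+1); have := leq_mul (ltnSE jb) (leqnn a.+1); lia.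
move=> b_gt0; apply: uniq_cat_lt; rewrite ?uniq_block //.
  apply: uniq_cat_lt; rewrite ?uniq_block ?map_inj_uniq ?iota_uniq //.
  - by move=> i j /=; nia.
  - by move=> x y /teeth_range hx; rewrite mem_block; lia.
move=> x y; rewrite mem_block mem_cat mem_block => hx /orP [/teeth_range|]; nia.
Qed.

Lemma size_cna_list a b : size (cna_list a b) = (2 * a + b)%N.
Proof. by rewrite !size_cat !size_block size_map size_iota; lia. Qed.

Lemma mem_cna_list a b x : x \in cna_list a b =
  (x \in G_NA a b) || ((b * a.+1)%:Z <= x < (b * a.+1)%:Z + a%:Z).
Proof. by rewrite /cna_list catA mem_cat G_NA_eq mem_block. Qed.

Lemma mem_D_CNA a b x : x \in D_CNA a b =
  (x \in G_NA a b) || ((b * a.+1)%:Z <= x < (b * a.+1)%:Z + a%:Z).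
Proof.
rewrite mem_cat; congr (_ || _); apply/mapP/idP => [[y]|hx].
- by rewrite /D1 mem_rng => hy ->; lia.
- by exists (x - (b * a.+1)%:Z); rewrite /D1 ?mem_rng; lia.
Qed.

(* For lam = N1 = a the reflected copy of G_NA(a,b) adds only the block
   [b(a+1), b(a+1)+a): reflected teeth are teeth again. *)
Lemma mem_symNA_cna a b x : (0 < b)%N -> x \in symNA a b a =
  (x \in G_NA a b) || ((b * a.+1)%:Z <= x < (b * a.+1)%:Z + a%:Z).
Proof.
move=> b_gt0; have spreadG := G_NA_spread a b_gt0.
have memS : x \in symS (G_NA a b) a <-> _ := mem_symS spreadG a x.
rewrite -[symNA _ _ _]/(symS (G_NA a b) a) na_aperture_teeth // in memS *.
apply/idP/idP => [/memS [->//|[g]]|/orP [xG|hx]]; last 2 first.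
- by apply/memS; left.
- apply/memS; right; exists ((b * a.+1)%:Z - 1 + a%:Z - x); last lia.
  by apply/mem_G_NA; left; lia.
rewrite G_NA_eq mem_cat mem_block => /orP [hg ->|/mapP [j]]; first by apply/orP; right; lia.
rewrite mem_iota => /andP [j_gt0 jb] -> ->; apply/orP; left; apply/mem_G_NA; right.
exists (b - j).+1; first lia.
have -> : ((b - j).+1 * a.+1 = b * a.+1 - j * a.+1 + a.+1)%N.
  by rewrite mulSn addnC -mulnBl; lia.
by have := leq_mul (ltnSE jb) (leqnn a.+1); lia.
Qed.

Lemma cna_admissible a b : (0 < b)%N ->
  [/\ admissible (2 * a + b) a b a,
      maxS (symNA a b a) = cna_aperture (2 * a + b) a
    & symNA a b a =i D_CNA a b].
Proof.
move=> b_gt0; have spreadG := G_NA_spread a b_gt0.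
have L_eq := na_aperture_teeth a b_gt0.
have eq_list : symNA a b a =i cna_list a b.
  by move=> x; rewrite mem_symNA_cna // mem_cna_list.
split.
- split; first lia.
  + by rewrite (card_eq (uniq_cna_list a b_gt0)) ?size_cna_list // => x; rewrite eq_list.
  + by apply: (symS_full_sum spreadG); rewrite L_eq; lia.
- by rewrite (maxS_symS spreadG) L_eq /cna_aperture; lia.
- by move=> x; rewrite eq_list mem_cna_list mem_D_CNA.
Qed.

Lemma cna_aperture_argmax N : (0 < N)%N -> exists2 a, (2 * a < N)%N &
  forall a', (2 * a' < N)%N -> cna_aperture N a' <= cna_aperture N a.
Proof.
case: N => // n _.
have [i i_ok i_max] := @arg_maxP _ _ 'I_n.+1 ord0 (fun i => 2 * i < n.+1)%N
  (fun i => cna_aperture n.+1 i) isT.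
exists i => // a' a'_ok; have a'_lt : (a' < n.+1)%N by lia.
exact: (i_max (Ordinal a'_lt)).
Qed.

Theorem mainTheorem6 (N : nat) (hN : (0 < N)%N) :
  exists N1 N2 lam : nat,
    [/\ admissible N N1 N2 lam,
        (forall M1 M2 mu : nat, admissible N M1 M2 mu ->
           maxS (symNA M1 M2 mu) <= maxS (symNA N1 N2 lam))
      & exists N1' N2' : nat, symNA N1 N2 lam =i D_CNA N1' N2'].
Proof.
have [a a_ok a_max] := cna_aperture_argmax hN.
have b_gt0 : (0 < N - 2 * a)%N by lia.
have [adm apert eq_cna] := cna_admissible a b_gt0.
have N_eq : (2 * a + (N - 2 * a))%N = N by lia.
rewrite N_eq in adm apert.
exists a, (N - 2 * a)%N, a; split => //; last by exists a, (N - 2 * a)%N.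
move=> M1 M2 mu /admissible_aperture_bound [a' [a'_ok bound]].
by rewrite apert; apply: le_trans bound (a_max _ a'_ok).
Qed.
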